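(* Let $\lambda\in\mathbb{C}$, let $(p_l)_{l\in\mathbb{Z}},(q_m)_{m\in\mathbb{Z}}$ be complex sequences, and let $u,v:\mathbb{Z}^2\to\mathbb{C}$ satisfy, for all $(l,m)\in\mathbb{Z}^2$ (with all denominators nonzero), \[ \widetilde{\overline u}-u-\frac{q_{m+1}-p_l}{\widetilde u}+\frac{q_m-p_{l+1}}{\overline u}=0,\qquad u-\widetilde{\overline v}-\frac{q_m-p_{l+1}}{\overline u}+\frac{\lambda-p_l}{\widetilde v}=0, \] \[ (u-v)\Big(\frac{q_m-p_l}{u}+\widetilde v\Big)-q_m+\lambda=0,\qquad \frac{q_m-p_l}{u}-\frac{\lambda-p_l}{v}-\overline u+\overline v=0. \] Then $v$ satisfies, for all $(l,m)$, \[ \begin{aligned} &q_m\big(v\overline v-\widetilde v\widetilde{\overline v}\big)^2+\big(v-\widetilde{\overline v}\big)\big(\overline v-\widetilde v\big)\big(\lambda-v\overline v\big)\big(\lambda-\widetilde v\widetilde{\overline v}\big) +\big(p_{l+1}v-p_l\widetilde{\overline v}\big)\big(p_l\overline v-p_{l+1}\widetilde v\big)\\ &\quad-(p_l+p_{l+1})\big(\lambda v\overline v+\lambda\widetilde v\widetilde{\overline v}-2v\overline v\widetilde v\widetilde{\overline v}\big) +\big(p_{l+1}v\widetilde v+p_l\overline v\widetilde{\overline v}\big)\big(2\lambda-v\overline v-\widetilde v\widetilde{\overline v}\big)=0. \end{aligned} \]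
   Context: Shift notation: for $f:\mathbb{Z}^2\to\mathbb{C}$, $f=f_{l,m}$, $\overline f=f_{l+1,m}$, $\widetilde f=f_{l,m+1}$, $\widetilde{\overline f}=f_{l+1,m+1}$; $p_l$ and $q_m$ are parameters depending only on $l$ and only on $m$ respectively. *)

From HB Require Import structures.
From mathcomp Require Import all_boot all_order all_algebra.
From mathcomp Require Import complex.
From mathcomp Require Import Rstruct.
From Stdlib Require Import Reals.
Set Implicit Arguments. Unset Strict Implicit. Unset Printing Implicit Defensive.
Import Order.TTheory GRing.Theory Num.Theory.

Definition C : Type := complex Rdefinitions.R.

From HB Require Import structures.
From mathcomp Require Import all_boot all_order all_algebra.
From mathcomp Require Import complex.
From mathcomp Require Import Rstruct.
From mathcomp Require Import ring.
Import Order.TTheory GRing.Theory Num.Theory.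
Local Open Scope ring_scope.

(* The statement is local: at a fixed vertex (l, m) it only
   involves the four values v, v~, v-, v~- of v on the elementary square, the
   two values u, u- of u on its lower edge, and the parameters lam, p_l,
   p_{l+1}, q_m (below f- denotes the shift f_{l+1,m} and f~ the shift
   f_{l,m+1}).  We work over an arbitrary field with these as indeterminates.
   1. The equations (3) and (4) at (l, m) give a linear "ratio relation"
      between u and u-; equation (3) at (l+1, m) together with (2) at (l, m)
      give a second linear relation between u and u-.
   2. Eliminating u- between them expresses u rationally through v:
      K * u = L, with K = v v- - v~ v~- (and L explicit below).
   3. A polynomial identity writes v times the quad-equation for v as a
      combination of equation (3) at (l, m) and of K * u - L; hence it
      vanishes, and v != 0 lets us cancel. *)

Section QuadEquation.

Context {F : fieldType}.

(* Parameters: lam, p = p_l, P = p_{l+1}, Q = q_m. *)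
Context {lam p P Q : F}.

Context {U Ub v0 v1 v2 v12 : F}.

Hypotheses (hU : U != 0) (hUb : Ub != 0) (hv0 : v0 != 0) (hv2 : v2 != 0).

Definition quad_lhs : F :=
  Q * (v0 * v1 - v2 * v12) ^+ 2
  + (v0 - v12) * (v1 - v2) * (lam - v0 * v1) * (lam - v2 * v12)
  + (P * v0 - p * v12) * (p * v1 - P * v2)
  - (p + P) * (lam * v0 * v1 + lam * v2 * v12 - 2 * v0 * v1 * v2 * v12)
  + (P * v0 * v2 + p * v1 * v12) * (2 * lam - v0 * v1 - v2 * v12).

Definition eq3_lhs : F := (U - v0) * ((Q - p) / U + v2) - Q + lam.

Definition coef_K : F := v0 * v1 - v2 * v12.
Definition coef_L : F :=
  v0 * (v12 * (v1 - v2) + (lam - P) - (lam - p) * v1 / v2).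

Lemma ratio_relation :
  eq3_lhs = 0 ->
  (Q - p) / U - (lam - p) / v0 - Ub + v1 = 0 ->
  v2 * (U - v0) - v0 * (Ub - v1) = 0.
Proof.
move=> e3 e4.
have -> : v2 * (U - v0) - v0 * (Ub - v1) =
  eq3_lhs + v0 * ((Q - p) / U - (lam - p) / v0 - Ub + v1).
  by rewrite /eq3_lhs; field; rewrite hv0 hU.
by rewrite e3 e4 mulr0 addr0.
Qed.

Lemma shifted_relation :
  (Ub - v1) * ((Q - P) / Ub + v12) - Q + lam = 0 ->
  U - v12 - (Q - P) / Ub + (lam - p) / v2 = 0 ->
  v1 * U - v12 * Ub - (lam - P - v1 * (lam - p) / v2) = 0.
Proof.
move=> e3s e2.
have -> : v1 * U - v12 * Ub - (lam - P - v1 * (lam - p) / v2) =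
  - ((Ub - v1) * ((Q - P) / Ub + v12) - Q + lam)
  + v1 * (U - v12 - (Q - P) / Ub + (lam - p) / v2).
  by field; rewrite hv2 hUb.
by rewrite e3s e2 mulr0 addr0 oppr0.
Qed.

Lemma u_from_v :
  v2 * (U - v0) - v0 * (Ub - v1) = 0 ->
  v1 * U - v12 * Ub - (lam - P - v1 * (lam - p) / v2) = 0 ->
  coef_L - coef_K * U = 0.
Proof.
move=> r1 r2.
have -> : coef_L - coef_K * U =
  - v0 * (v1 * U - v12 * Ub - (lam - P - v1 * (lam - p) / v2))
  + v12 * (v2 * (U - v0) - v0 * (Ub - v1)).
  by rewrite /coef_L /coef_K; field; rewrite hv2.
by rewrite r1 r2 !mulr0 addr0.
Qed.

Lemma quad_lhs_decomposition :
  quad_lhs * v0 =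
  - coef_K ^+ 2 * U * eq3_lhs
  - (coef_L - coef_K * U)
    * (v2 * (coef_L + coef_K * U) + (lam - p - v0 * v2) * coef_K).
Proof.
by rewrite /quad_lhs /eq3_lhs /coef_L /coef_K; field; rewrite hv2 hU.
Qed.

Lemma quad_lhs_eq0 :
  eq3_lhs = 0 -> coef_L - coef_K * U = 0 -> quad_lhs = 0.
Proof.
move=> e3 KL; apply: (mulIf hv0).
by rewrite mul0r quad_lhs_decomposition e3 KL !mulr0 !mul0r subr0.
Qed.

End QuadEquation.

Theorem mainTheorem8 (lam : C) (p q : int -> C) (u v : int -> int -> C)
  (hu0 : forall l m : int, u l m != 0)
  (hv0 : forall l m : int, v l m != 0)
  (e1 : forall l m : int,
     u (l + 1) (m + 1) - u l m - (q (m + 1) - p l) / u l (m + 1)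
       + (q m - p (l + 1)) / u (l + 1) m = 0)
  (e2 : forall l m : int,
     u l m - v (l + 1) (m + 1) - (q m - p (l + 1)) / u (l + 1) m
       + (lam - p l) / v l (m + 1) = 0)
  (e3 : forall l m : int,
     (u l m - v l m) * ((q m - p l) / u l m + v l (m + 1)) - q m + lam = 0)
  (e4 : forall l m : int,
     (q m - p l) / u l m - (lam - p l) / v l m - u (l + 1) m + v (l + 1) m = 0) :
  forall l m : int,
    let v0 := v l m in
    let v1 := v (l + 1) m in
    let v2 := v l (m + 1) in
    let v12 := v (l + 1) (m + 1) in
    q m * (v0 * v1 - v2 * v12) ^+ 2
    + (v0 - v12) * (v1 - v2) * (lam - v0 * v1) * (lam - v2 * v12)
    + (p (l + 1) * v0 - p l * v12) * (p l * v1 - p (l + 1) * v2)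
    - (p l + p (l + 1)) * (lam * v0 * v1 + lam * v2 * v12 - 2 * v0 * v1 * v2 * v12)
    + (p (l + 1) * v0 * v2 + p l * v1 * v12) * (2 * lam - v0 * v1 - v2 * v12)
    = 0.
Proof.
move=> l m v0 v1 v2 v12.
have ratio := ratio_relation (hu0 l m) (hv0 l m) (e3 l m) (e4 l m).
have shifted := shifted_relation (hu0 (l + 1) m) (hv0 l (m + 1))
  (e3 (l + 1) m) (e2 l m).
have KU_eq_L := u_from_v (hv0 l (m + 1)) ratio shifted.
exact: (@quad_lhs_eq0 C lam (p l) (p (l + 1)) (q m) (u l m) v0 v1 v2 v12
  (hu0 l m) (hv0 l m) (hv0 l (m + 1)) (e3 l m) KU_eq_L).
Qed.
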